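(* Let $W\in\mathbb{R}^{n\times n}$ be positive definite (i.e. $x^TWx>0$ for all nonzero $x\in\mathbb{R}^n$; $W$ need not be symmetric), let $B\in\mathbb{R}^{m\times n}$ with $\operatorname{rank}(B)<m\le n$, and let $$A=\begin{pmatrix} W & B^T\\ -B & 0\end{pmatrix},$$ and let $b\in\mathbb{R}^{n+m}$ lie in the range of $A$. Let $P\in\mathbb{R}^{n\times n}$ be positive definite (not necessarily symmetric) and $$M=\begin{pmatrix} P & B^T\\ -B & 0\end{pmatrix}.$$ Consider the iteration $x^{(k+1)}=x^{(k)}+M^\dagger(b-Ax^{(k)})$, $k=0,1,2,\dots$, where $M^\dagger$ is the Moore–Penrose inverse of $M$. Let $E=BP^{-1}B^T$ and $X=P^{-1}-P^{-1}B^TE^\dagger BP^{-1}$. Then this iteration is convergent if and only if $\gamma(X(P-W))<1$.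
   Context: For a square matrix $T$ with spectrum $\sigma(T)$, $\gamma(T)=\max\{|\lambda|:\lambda\in\sigma(T)\setminus\{1\}\}$ (the pseudo-spectral radius). $E^\dagger$ denotes the Moore–Penrose inverse of $E$. The iteration is called convergent if the sequence $x^{(k)}$ converges (to a solution of $Ax=b$) for every initial guess $x^{(0)}$; equivalently, with iteration matrix $T=I-M^\dagger A$, the limit $\lim_{k\to\infty}T^k$ exists. *)

From HB Require Import structures.
From mathcomp Require Import all_boot all_order all_algebra.
From mathcomp Require Import all_classical all_reals.
From mathcomp Require Import topology normedtype sequences.
From mathcomp.real_closed Require Import complex.
Set Implicit Arguments. Unset Strict Implicit. Unset Printing Implicit Defensive.
Import Order.TTheory GRing.Theory Num.Theory.
Import numFieldNormedType.Exports.
Local Open Scope ring_scope.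
Local Open Scope classical_set_scope.

Definition posdef (R : realType) (n : nat) (W : 'M[R]_n) : Prop :=
  forall x : 'cV[R]_n, x != 0 -> 0 < (x^T *m W *m x) 0 0.

Definition is_MP (R : realType) (p q : nat) (A : 'M[R]_(p, q)) (X : 'M[R]_(q, p)) : Prop :=
  [/\ A *m X *m A = A, X *m A *m X = X,
      (A *m X)^T = A *m X & (X *m A)^T = X *m A].

(* Moore--Penrose inverse (exists and is unique; chosen by classical choice) *)
Definition mpinv (R : realType) (p q : nat) (A : 'M[R]_(p, q)) : 'M[R]_(q, p) :=
  xget 0 [set X | is_MP A X].

Definition cplx_mx (R : realType) (n : nat) (T : 'M[R]_n) : 'M[R[i]]_n :=
  map_mx (real_complex R) T.

(* pseudo-spectral radius: max{|lambda| : lambda in sigma(T) \ {1}}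
   (spectrum over the complex numbers; max over the empty set is 0) *)
Definition gamma (R : realType) (n : nat) (T : 'M[R]_n) : R :=
  sup [set Normc.normc l | l in [set l : R[i] | eigenvalue (cplx_mx T) l /\ l != 1]].

Definition iter_seq (R : realType) (N : nat) (A Md : 'M[R]_N) (b x0 : 'cV[R]_N)
  : nat -> 'cV[R]_N :=
  fix f k := if k is k'.+1 then f k' + Md *m (b - A *m f k') else x0.

Definition iteration_convergent (R : realType) (N : nat) (A Md : 'M[R]_N) (b : 'cV[R]_N) : Prop :=
  forall x0 : 'cV[R]_N, exists xs : 'cV[R]_N,
    (forall i j, (fun k => iter_seq A Md b x0 k i j) @ \oo --> xs i j) /\ A *m xs = b.

From HB Require Import structures.
From mathcomp Require Import all_boot all_order all_algebra.
From mathcomp Require Import all_classical all_reals.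
From mathcomp Require Import topology normedtype sequences.
From mathcomp.real_closed Require Import complex.
From mathcomp Require Import lra.
Set Implicit Arguments. Unset Strict Implicit. Unset Printing Implicit Defensive.
Import Order.TTheory GRing.Theory Num.Theory.
Import numFieldNormedType.Exports.
Local Open Scope ring_scope.
Local Open Scope classical_set_scope.

(* With S = E^+, the Moore-Penrose inverse of M is the explicit block matrix
   Y = [[X, -P^-1 B^T S], [S B P^-1, S]], so the iteration matrix I - Y A is
   block lower triangular, [[G, 0], [H, Q]] with G = X (P - W) and
   Q = I - S E an idempotent with Q H = 0. Hence its (k+1)-st power is
   [[0, 0], [0, Q]] + [G; H] G^k [I, 0], and the iteration converges iff the
   powers of G converge (the limit is a solution because A [[0,0],[0,Q]] = 0).
   If the powers of G converge, every eigenvalue of G other than 1 has modulus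
   less than 1. Conversely, positive definiteness of W shows that G has no
   fixed vector, so when gamma(G) < 1 all eigenvalues of G lie in the open
   unit disc, and the Cayley-Hamilton theorem then forces G^k -> 0. *)

Section MoorePenrose.
Variable R : realType.

Lemma mulmx_trmx_eq0 q (v : 'rV[R]_q) : (v *m v^T) 0 0 = 0 -> v = 0.
Proof.
rewrite !mxE => v2_0; apply/rowP => i; rewrite mxE.
have sq_ge0 j : predT j -> 0 <= v 0 j * v^T j 0.
  by move=> _; rewrite mxE -expr2 sqr_ge0.
have := psumr_eq0P sq_ge0 v2_0 (i := i) isT.
by rewrite mxE => /eqP; rewrite mulf_eq0 orbb => /eqP.
Qed.

Lemma row_free_mulmx_trmx_unit r q (K : 'M[R]_(r, q)) :
  row_free K -> K *m K^T \in unitmx.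
Proof.
move=> freeK; rewrite -row_free_unit; apply/inj_row_free => v vKKt0.
have vK0 : v *m K = 0.
  by apply: mulmx_trmx_eq0; rewrite trmx_mul mulmxA -(mulmxA v) vKKt0 mul0mx mxE.
by apply: (row_free_inj freeK); rewrite vK0 mul0mx.
Qed.

Lemma is_MP_full_rank_factor p q r (C : 'M[R]_(p, r)) (F : 'M[R]_(r, q)) :
  row_free C^T -> row_free F ->
  is_MP (C *m F) (F^T *m invmx (F *m F^T) *m invmx (C^T *m C) *m C^T).
Proof.
move=> freeC freeF.
have uF := row_free_mulmx_trmx_unit freeF.
have uC := row_free_mulmx_trmx_unit freeC; rewrite trmxK in uC.
set U := invmx (F *m F^T); set V := invmx (C^T *m C).
have UT : U^T = U by rewrite /U trmx_inv trmx_mul trmxK.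
have VT : V^T = V by rewrite /V trmx_inv trmx_mul trmxK.
have FU k (N : 'M_(k, r)) : N *m F *m F^T *m U = N.
  by rewrite -!mulmxA /U (mulmxA F) mulmxV // mulmx1.
have VC k (N : 'M_(k, r)) : N *m V *m C^T *m C = N.
  by rewrite -!mulmxA /V mulVmx // mulmx1.
have AX : C *m F *m (F^T *m U *m V *m C^T) = C *m V *m C^T.
  by rewrite !mulmxA FU.
have XA : F^T *m U *m V *m C^T *m (C *m F) = F^T *m U *m F.
  by rewrite !mulmxA VC.
split.
- by rewrite AX !mulmxA VC.
- by rewrite XA !mulmxA FU.
- by rewrite AX !trmx_mul trmxK VT mulmxA.
- by rewrite XA !trmx_mul trmxK UT mulmxA.
Qed.

Lemma is_MP_exists p q (A : 'M[R]_(p, q)) : exists X, is_MP A X.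
Proof.
rewrite -[A]mulmx_base; eexists; apply: is_MP_full_rank_factor.
  by rewrite /row_free mxrank_tr; exact: col_base_full.
exact: row_base_free.
Qed.

Lemma is_MP_uniq p q (A : 'M[R]_(p, q)) X Y : is_MP A X -> is_MP A Y -> X = Y.
Proof.
move=> [AXA XAX AXT XAT] [AYA YAY AYT YAT].
have AtYtAt : A^T = A^T *m Y^T *m A^T by rewrite -!trmx_mul mulmxA AYA.
have AX_AY : A *m X = A *m Y.
  rewrite -{1}AXT trmx_mul {1}AtYtAt !mulmxA -trmx_mul AXT -mulmxA -trmx_mul.
  by rewrite AYT mulmxA AXA.
have XA_YA : X *m A = Y *m A.
  rewrite -{1}XAT trmx_mul {1}AtYtAt -(mulmxA (A^T *m Y^T)).
  rewrite -[A^T *m Y^T]trmx_mul -[A^T *m X^T]trmx_mul YAT XAT.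
  by rewrite mulmxA -(mulmxA Y A X) -mulmxA AXA.
by rewrite -XAX -mulmxA AX_AY mulmxA XA_YA YAY.
Qed.

Lemma mpinvP p q (A : 'M[R]_(p, q)) : is_MP A (mpinv A).
Proof.
rewrite /mpinv; case: xgetP => //= noMP.
by have [X MPX] := is_MP_exists A; have := noMP X.
Qed.

Lemma mpinv_eq p q (A : 'M[R]_(p, q)) X : is_MP A X -> mpinv A = X.
Proof. exact: is_MP_uniq (mpinvP A). Qed.

End MoorePenrose.

Section PositiveDefinite.
Variables (R : realType) (n : nat).
Implicit Types (Q : 'M[R]_n) (x : 'cV[R]_n).

Lemma posdef_quad_eq0 Q x : posdef Q -> (x^T *m Q *m x) 0 0 = 0 -> x = 0.
Proof. by move=> pdQ xQx0; apply: contra_eq xQx0 => /pdQ /lt0r_neq0. Qed.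

Lemma posdef_congr_eq0 k Q (C : 'M[R]_(n, k)) : posdef Q ->
  C^T *m Q *m C = 0 -> C = 0.
Proof.
move=> pdQ CtQC0; apply/matrixP => i j; rewrite mxE.
have : C *m (delta_mx j 0 : 'M_(k, 1)) = 0.
  apply: (posdef_quad_eq0 pdQ).
  by rewrite trmx_mul !mulmxA -(mulmxA _ C^T) -(mulmxA _ (C^T *m Q)) CtQC0
    mulmx0 mul0mx mxE.
by rewrite -colE => /(congr1 (fun v : 'cV[R]_n => v i 0)); rewrite !mxE.
Qed.

Lemma posdef_unitmx Q : posdef Q -> Q \in unitmx.
Proof.
move=> pdQ; rewrite -row_free_unit; apply/inj_row_free => v vQ0.
suff : v^T = 0 by move/(congr1 trmx); rewrite trmxK trmx0.
by apply: (posdef_quad_eq0 pdQ); rewrite trmxK vQ0 mul0mx mxE.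
Qed.

Lemma posdef_invmx Q : posdef Q -> posdef (invmx Q).
Proof.
move=> pdQ x x0; have uQ := posdef_unitmx pdQ.
set w := invmx Q *m x.
have xE : x = Q *m w by rewrite /w mulmxA mulmxV // mul1mx.
have w0 : w != 0 by apply: contraNneq x0 => w0; rewrite xE w0 mulmx0.
rewrite xE trmx_mul -!mulmxA (mulmxA (invmx Q)) mulVmx // mul1mx mulmxA.
have trE : (w^T *m Q^T *m w)^T = w^T *m Q *m w by rewrite !trmx_mul !trmxK mulmxA.
suff -> : (w^T *m Q^T *m w) 0 0 = (w^T *m Q *m w) 0 0 by exact: pdQ.
by rewrite -trE [RHS]mxE.
Qed.

End PositiveDefinite.

(* For a positive definite Q the "Gram" matrix E = B Q B^T has the same row
   and column space as B, so one-sided Penrose identities for S cancel against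
   B. *)
Section GramPinv.
Variables (R : realType) (n m : nat) (B : 'M[R]_(m, n)) (Q : 'M[R]_n).
Variables (E S : 'M[R]_m).
Hypotheses (pdQ : posdef Q) (defE : E = B *m Q *m B^T) (ESE : E *m S *m E = E).

Lemma trmx_gram_pinvK : (S *m E)^T = S *m E -> B^T *m S *m E = B^T.
Proof.
move=> SEt; set Z := 1%:M - S *m E.
have EZ : E *m Z = 0 by rewrite /Z mulmxBr mulmx1 mulmxA ESE subrr.
have Zt : Z^T = Z by rewrite /Z linearB /= trmx1 SEt.
have : B^T *m Z = 0.
  apply: (posdef_congr_eq0 pdQ).
  by rewrite trmx_mul trmxK Zt -!mulmxA (mulmxA B) (mulmxA (B *m Q)) -defE EZ
    !mulmx0.
by rewrite /Z mulmxBr mulmx1 mulmxA => /eqP; rewrite subr_eq0 => /eqP <-.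
Qed.

Lemma gram_pinvK : (E *m S)^T = E *m S -> E *m S *m B = B.
Proof.
move=> ESt; set Z := 1%:M - E *m S.
have ZE : Z *m E = 0 by rewrite /Z mulmxBl mul1mx ESE subrr.
have Zt : Z^T = Z by rewrite /Z linearB /= trmx1 ESt.
have : B^T *m Z = 0.
  apply: (posdef_congr_eq0 pdQ).
  by rewrite trmx_mul trmxK Zt !mulmxA -(mulmxA Z) -(mulmxA Z) -defE ZE mul0mx.
move=> /(congr1 trmx); rewrite trmx_mul Zt trmxK trmx0.
by rewrite /Z mulmxBl mul1mx => /eqP; rewrite subr_eq0 => /eqP <-.
Qed.

End GramPinv.

Section SaddlePoint.
Variables (R : realType) (n m : nat) (W P Pi : 'M[R]_n) (B : 'M[R]_(m, n)).
Variables (E S : 'M[R]_m).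
Hypotheses (pdPi : posdef Pi) (PPi : P *m Pi = 1%:M).
Hypotheses (defE : E = B *m Pi *m B^T) (MPS : is_MP E S).

Local Notation X := (Pi - Pi *m B^T *m S *m B *m Pi).
Local Notation Y := (block_mx X (- (Pi *m B^T *m S)) (S *m B *m Pi) S).
Local Notation M := (block_mx P B^T (- B) 0).
Local Notation A := (block_mx W B^T (- B) 0).
Local Notation G := (X *m (P - W)).
Local Notation H := (S *m B *m Pi *m (P - W)).
Local Notation Q := (1%:M - S *m E).

Let PiP : Pi *m P = 1%:M := mulmx1C PPi.
Let ESE : E *m S *m E = E. Proof. by case: MPS. Qed.
Let SES : S *m E *m S = S. Proof. by case: MPS. Qed.
Let BtSE : B^T *m S *m E = B^T.
Proof. by apply: (trmx_gram_pinvK pdPi defE ESE); case: MPS. Qed.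
Let ESB : E *m S *m B = B.
Proof. by apply: (gram_pinvK pdPi defE ESE); case: MPS. Qed.

Let mulmxBPiBt k (N : 'M_(k, m)) : N *m B *m Pi *m B^T = N *m E.
Proof. by rewrite defE !mulmxA. Qed.
Let mulmxBtSE k (N : 'M_(k, n)) : N *m B^T *m S *m E = N *m B^T.
Proof. by rewrite -{2}BtSE !mulmxA. Qed.
Let mulmxPiP k (N : 'M_(k, n)) : N *m Pi *m P = N.
Proof. by rewrite -mulmxA PiP mulmx1. Qed.

Lemma mulX_trB : X *m B^T = 0.
Proof. by rewrite mulmxBl ?mulmxA mulmxBPiBt mulmxBtSE subrr. Qed.

Lemma mulB_X : B *m X = 0.
Proof. by rewrite mulmxBr ?mulmxA -defE ESB subrr. Qed.

Lemma mulP_X : P *m X = 1%:M - B^T *m S *m B *m Pi.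
Proof. by rewrite mulmxBr ?mulmxA PPi !mul1mx. Qed.

Lemma mulX_P : X *m P = 1%:M - Pi *m B^T *m S *m B.
Proof. by rewrite mulmxBl ?mulmxA PiP mulmxPiP. Qed.

Lemma saddle_pinv_is_MP : is_MP M Y.
Proof.
have MY : M *m Y = block_mx 1%:M 0 0 (E *m S).
  rewrite mulmx_block !mulNmx mulP_X mulB_X !mulmxN ?mulmxA PPi mul1mx subrK.
  by rewrite addNr oppr0 !mul0mx !addr0 opprK -defE.
have YM : Y *m M = block_mx 1%:M 0 0 (S *m E).
  rewrite mulmx_block mulX_P mulX_trB !mulmxN !mulNmx !mulmx0 ?mulmxA.
  by rewrite opprK subrK subrr mulmxPiP subrr addr0 mulmxBPiBt.
split.
- by rewrite MY mulmx_block !mul1mx !mul0mx !addr0 !add0r mulmxN ESB mulmx0.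
- by rewrite YM mulmx_block !mul1mx !mul0mx !addr0 !add0r ?mulmxA !SES.
- by rewrite MY tr_block_mx !trmx0 trmx1; case: MPS => _ _ ->.
- by rewrite YM tr_block_mx !trmx0 trmx1; case: MPS => _ _ _ ->.
Qed.

Lemma saddle_iteration_block : 1%:M - Y *m A = block_mx G 0 H Q.
Proof.
rewrite mulmx_block mulX_trB !mulmxN !mulNmx !mulmx0 opprK ?mulmxA subrr.
rewrite mulmxBPiBt addr0 (scalar_mx_block n m) opp_block_mx add_block_mx.
rewrite !oppr0 !add0r; congr block_mx.
- by rewrite mulmxBr mulX_P opprD addrA addrAC.
- by rewrite opprB mulmxBr ?mulmxA mulmxPiP.
Qed.

Lemma mulQH : Q *m H = 0.
Proof. by rewrite mulmxBl mul1mx ?mulmxA SES subrr. Qed.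

Lemma mulQQ : Q *m Q = Q.
Proof. by rewrite mulmxBl mul1mx mulmxBr mulmx1 ?mulmxA SES subrr subr0. Qed.

Lemma mul_saddle_projQ : A *m (block_mx 0 0 0 Q : 'M_(n + m)) = 0.
Proof.
have BtQ : B^T *m Q = 0 by rewrite mulmxBr mulmx1 mulmxA BtSE subrr.
by rewrite mulmx_block !mulmx0 !addr0 BtQ !add0r mul0mx block_mx0.
Qed.

Hypothesis pdW : posdef W.

(* G x = x forces B x = 0 and then W x = B^T (S B Pi W x), so x^T W x = 0. *)
Lemma saddle_fixpoint_eq0 (x : 'cV[R]_n) : G *m x = x -> x = 0.
Proof.
set K := Pi *m B^T *m S *m B.
rewrite mulmxBr mulX_P mulmxBl (mulmxBl 1%:M K) mul1mx => Gx.
have KxXWx : K *m x + X *m W *m x = 0.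
  apply/eqP; rewrite -oppr_eq0; apply/eqP/(addrI x).
  by rewrite addr0 opprD addrA.
have Bx : B *m x = 0.
  move/(congr1 (mulmx B)): KxXWx.
  by rewrite mulmxDr mulmx0 /K !mulmxA -defE ESB mulB_X !mul0mx addr0.
have XWx : X *m W *m x = 0.
  by move: KxXWx; rewrite /K -!mulmxA Bx !mulmx0 add0r mulmxA.
have Wx : W *m x = B^T *m (S *m B *m Pi *m W *m x).
  move/(congr1 (mulmx P)): XWx; rewrite mulmx0 !mulmxA mulP_X mulmxBl mul1mx.
  by rewrite mulmxBl => /eqP; rewrite subr_eq0 => /eqP ->.
apply: (posdef_quad_eq0 pdW).
by rewrite -mulmxA Wx mulmxA -trmx_mul Bx trmx0 mul0mx mxE.
Qed.

End SaddlePoint.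

Section Limits.
Variable R : realType.

Lemma cvg0_eventually_le (u : nat -> R) (eps : R) : u @ \oo --> 0 -> 0 < eps ->
  exists N, forall k, (N <= k)%N -> `|u k| <= eps.
Proof. by move=> /cvgr0Pnorm_le u0 /u0 [N _ HN]; exists N => k /HN. Qed.

Lemma cvg_sum0 (I : Type) (r : seq I) (f : I -> nat -> R) :
  (forall i, f i @ \oo --> 0) -> (fun k => \sum_(i <- r) f i k) @ \oo --> 0.
Proof.
move=> f0; have := cvg_big (x0 := 0) (P := xpredT) add_continuous (r := r) _
  (fun i _ => f0 i).
by rewrite big1 //; apply.
Qed.

Lemma cvg0_mulmx_mid p q r s (C : 'M[R]_(p, q)) (Z : nat -> 'M[R]_(q, r))
    (D : 'M[R]_(r, s)) :
  (forall a b, (fun k => Z k a b) @ \oo --> 0) ->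
  forall i j, (fun k => (C *m Z k *m D) i j) @ \oo --> 0.
Proof.
move=> Z0 i j.
have -> : (fun k => (C *m Z k *m D) i j) =
    (fun k => \sum_l \sum_a (C i a * D l j) * Z k a l).
  apply: funext => k; rewrite mxE; apply: eq_bigr => l _.
  rewrite mxE mulr_suml; apply: eq_bigr => a _.
  by rewrite mulrAC mulrC [_ * D l j]mulrC mulrA.
apply: cvg_sum0 => l; apply: cvg_sum0 => a.
by rewrite -(mulr0 (C i a * D l j)); apply: cvgMl_tmp.
Qed.

(* Once the error is below eps (1 - c) / 2, the excess of a over eps / 2
   decays geometrically. *)
Lemma cvg0_contraction (a e : nat -> R) (c : R) : 0 <= c -> c < 1 ->
  (forall k, 0 <= a k) -> (forall k, a k.+1 <= c * a k + e k) ->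
  e @ \oo --> 0 -> a @ \oo --> 0.
Proof.
move=> c0 c1 a0 a_rec e0; apply/cvgr0Pnorm_le => eps eps0.
have eps_c : 0 < eps / 2 * (1 - c) by rewrite mulr_gt0 // ?divr_gt0 // subr_gt0.
have [N HN] := cvg0_eventually_le e0 eps_c.
have geom j : a (j + N)%N - eps / 2 <= c ^+ j * a N.
  elim: j => [|j IH].
    by rewrite add0n expr0 mul1r lerBlDr lerDl divr_ge0 // ltW.
  have eN : e (j + N)%N <= eps / 2 * (1 - c).
    by apply: le_trans (ler_norm _) (HN _ _); rewrite leq_addl.
  rewrite addSn exprS -mulrA; apply: le_trans (ler_wpM2l c0 IH).
  have := a_rec (j + N)%N; move: eN.
  rewrite mulrBr mulr1 mulrBr [eps / 2 * c]mulrC; lra.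
have cN0 : (fun j => c ^+ j * a N) @ \oo --> 0.
  by rewrite -(mul0r (a N)); apply: cvgMr_tmp; apply: cvg_expr; rewrite ger0_norm.
have [K HK] := cvg0_eventually_le cN0 (divr_gt0 eps0 (ltr0Sn _ 1)).
exists (K + N)%N => // k /= KNk.
have NK : (N <= k)%N by rewrite (leq_trans _ KNk) // leq_addl.
have Kk : (K <= k - N)%N by rewrite leq_subRL // addnC.
rewrite -(subnK NK) ger0_norm //.
have := geom (k - N)%N; have := le_trans (ler_norm _) (HK _ Kk); lra.
Qed.

End Limits.

Section Spectral.
Variable R : realType.
Local Notation normc := (@Normc.normc R).

Lemma normc_ge0 (z : R[i]) : 0 <= normc z.
Proof. by case: z => a b; rewrite /Normc.normc sqrtr_ge0. Qed.

Lemma normc_real (x : R) : normc x%:C%C = `|x|.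
Proof. by rewrite /Normc.normc /= expr0n /= addr0 sqrtr_sqr. Qed.

Lemma normcX (z : R[i]) k : normc (z ^+ k) = normc z ^+ k.
Proof.
elim: k => [|k IH]; first by rewrite !expr0 Normc.normc1.
by rewrite !exprS Normc.normcM IH.
Qed.

Lemma normc_sum (I : finType) (f : I -> R[i]) :
  normc (\sum_i f i) <= \sum_i normc (f i).
Proof.
elim: (index_enum I) => [|x r IH]; first by rewrite !big_nil Normc.normc0.
by rewrite !big_cons; apply: le_trans (le_normcD _ _) _; exact: lerD.
Qed.

Definition mxnorm1 n (Z : 'M[R[i]]_n) : R := \sum_i \sum_j normc (Z i j).

Lemma mxnorm1_ge0 n (Z : 'M[R[i]]_n) : 0 <= mxnorm1 Z.
Proof. by do 2![apply: sumr_ge0 => ? _]; exact: normc_ge0. Qed.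

Lemma mxnorm1_0 n : mxnorm1 (0 : 'M[R[i]]_n) = 0.
Proof.
by rewrite /mxnorm1 big1 // => i _; rewrite big1 // => j _; rewrite mxE Normc.normc0.
Qed.

Lemma ler_mxnorm1D n (Z1 Z2 : 'M[R[i]]_n) :
  mxnorm1 (Z1 + Z2) <= mxnorm1 Z1 + mxnorm1 Z2.
Proof.
rewrite /mxnorm1 -big_split /=; apply: ler_sum => i _.
by rewrite -big_split /=; apply: ler_sum => j _; rewrite mxE; exact: le_normcD.
Qed.

Lemma mxnorm1Z n (z : R[i]) (Z : 'M[R[i]]_n) :
  mxnorm1 (z *: Z) = normc z * mxnorm1 Z.
Proof.
rewrite /mxnorm1 mulr_sumr; apply: eq_bigr => i _; rewrite mulr_sumr.
by apply: eq_bigr => j _; rewrite mxE Normc.normcM.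
Qed.

Lemma normc_le_mxnorm1 n (Z : 'M[R[i]]_n) i j : normc (Z i j) <= mxnorm1 Z.
Proof.
rewrite /mxnorm1 (bigD1 i) //= (bigD1 j) //=.
have rest_i : 0 <= \sum_(j0 | j0 != j) normc (Z i j0).
  by apply: sumr_ge0 => *; exact: normc_ge0.
have rest : 0 <= \sum_(i0 | i0 != i) \sum_j normc (Z i0 j).
  by do 2![apply: sumr_ge0 => * ]; exact: normc_ge0.
lra.
Qed.

(* Peeling off one factor (Gc - z) of an annihilating product at a time:
   with F the remaining product, F Gc^(k+1) = z F Gc^k + (Gc - z) F Gc^k. *)
Lemma cvg0_mxnorm1_exp n (Gc : 'M[R[i]]_n.+1) (s : seq R[i]) :
  (forall z, z \in s -> normc z < 1) ->
  (fun k => mxnorm1 ((\prod_(z <- s) (Gc - z%:M)) * Gc ^+ k)) @ \oo --> 0 ->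
  (fun k => mxnorm1 (Gc ^+ k)) @ \oo --> 0.
Proof.
elim: s => [|z s IH] s_lt1 prod0.
  by move: prod0; under eq_fun do rewrite big_nil mul1r.
apply: IH => [y ys|]; first by apply: s_lt1; rewrite inE ys orbT.
set F := \prod_(y <- s) (Gc - y%:M).
have GcF : GRing.comm Gc F.
  apply: commr_prod => y _; apply: commrB; first exact: commr_refl.
  by rewrite /GRing.comm -!mulmxE scalar_mxC.
apply: (cvg0_contraction (c := normc z) _ _ _ _ prod0) => [||k|k].
- exact: normc_ge0.
- by apply: s_lt1; rewrite mem_head.
- exact: mxnorm1_ge0.
have -> : F * Gc ^+ k.+1 = z *: (F * Gc ^+ k) + (Gc - z%:M) * F * Gc ^+ k.
  have scalE (Z : 'M[R[i]]_n.+1) : z%:M * Z = z *: Z by exact: mul_scalar_mx.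
  by rewrite exprS mulrA -GcF !mulrBl scalE scalerAl addrC subrK.
by rewrite big_cons -/F -mulrA; apply: le_trans (ler_mxnorm1D _ _) _; rewrite mxnorm1Z.
Qed.

Lemma cplx_mxE n (G : 'M[R]_n) i j : cplx_mx G i j = (G i j)%:C%C.
Proof. by rewrite mxE. Qed.

Lemma cplx_mxX n (G : 'M[R]_n) k : cplx_mx (G ^+ k) = cplx_mx G ^+ k.
Proof.
elim: k => [|k IH]; first by rewrite !expr0 /cplx_mx map_mx1.
by rewrite !exprS -IH /cplx_mx -!mulmxE map_mxM.
Qed.

Lemma eigenvalues_cplx_mx n (G : 'M[R]_n) :
  exists rs : seq R[i], char_poly (cplx_mx G) = \prod_(z <- rs) ('X - z%:P) /\
    forall l, eigenvalue (cplx_mx G) l = (l \in rs).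
Proof.
have [rs def_chi] := closed_field_poly_normal (char_poly (cplx_mx G)).
move: def_chi; rewrite (monicP (char_poly_monic _)) scale1r => def_chi.
by exists rs; split => // l; rewrite eigenvalue_root_char def_chi root_prod_XsubC.
Qed.

Lemma mxexp_cvg0 n (G : 'M[R]_n) :
  (forall l, eigenvalue (cplx_mx G) l -> normc l < 1) ->
  forall i j, (fun k => (G ^+ k) i j) @ \oo --> 0.
Proof.
case: n G => [|n] G ev_lt1 i; first by case: i.
move=> j; set Gc := cplx_mx G.
have [rs [def_chi ev_rs]] := eigenvalues_cplx_mx G.
have prod0 : \prod_(z <- rs) (Gc - z%:M) = 0.
  have := Cayley_Hamilton Gc; rewrite def_chi rmorph_prod => <-.
  by apply: eq_bigr => z _; rewrite rmorphB /= horner_mx_X horner_mx_C.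
have rs_lt1 z : z \in rs -> normc z < 1 by rewrite -ev_rs; exact: ev_lt1.
have := cvg0_mxnorm1_exp (Gc := Gc) rs_lt1; rewrite prod0.
under eq_fun do rewrite mul0r mxnorm1_0.
move=> /(_ (cvg_cst _)) Gc0; apply/norm_cvg0P.
apply: (squeeze_cvgr _ (cvg_cst 0) Gc0); near=> k.
by rewrite normr_ge0 /= -normc_real -cplx_mxE cplx_mxX normc_le_mxnorm1.
Unshelve. all: by end_near.
Qed.

(* An eigenvector v for l gives (v Gc^(k+2) - v Gc^(k+1))_j = (l - 1) l^(k+1) v_j,
   which cannot tend to 0 when l <> 1 and |l| >= 1. *)
Lemma cvg_mxexp_eigenvalue_lt1 n (G : 'M[R]_n) :
  (forall a c, exists l : R, (fun k => (G ^+ k.+1) a c) @ \oo --> l) ->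
  forall l, eigenvalue (cplx_mx G) l -> l != 1 -> normc l < 1.
Proof.
move=> G_cvg l /eigenvalueP [v vG v0] l1; set Gc := cplx_mx G.
have vGk k : v *m Gc ^+ k = l ^+ k *: v.
  elim: k => [|k IH]; first by rewrite expr0 mulmx1 scale1r.
  by rewrite exprSr -mulmxE mulmxA IH -scalemxAl vG scalerA exprSr.
have [j vj] : exists j, v 0 j != 0.
  apply/existsP; apply: contraNT v0 => /existsPn v_eq0.
  by apply/eqP/rowP => j; rewrite mxE; apply/eqP/negPn.
rewrite ltNge; apply/negP => l_ge1.
pose g k a := (G ^+ k.+1) a j.
pose r k := \sum_a normc (v 0 a) * `|g k.+1 a - g k a|.
have r0 : r @ \oo --> 0.
  apply: cvg_sum0 => a; rewrite -(mulr0 (normc (v 0 a))); apply: cvgMl_tmp.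
  have [L GL] := G_cvg a j.
  have GSL : (fun k => g k.+1 a) @ \oo --> L by rewrite (cvg_shiftS (fun k => g k a)).
  by have := cvg_norm (cvgB GSL GL); rewrite subrr normr0; apply.
set delta := normc (l - 1) * normc (v 0 j).
have delta_gt0 : 0 < delta.
  rewrite /delta mulr_gt0 // lt_def normc_ge0 andbT.
    by apply: contra l1 => /eqP /Normc.eq0_normc /eqP; rewrite subr_eq0.
  by apply: contra vj => /eqP /Normc.eq0_normc ->.
have delta_le k : delta <= r k.
  have e1 : (v *m Gc ^+ k.+2) 0 j - (v *m Gc ^+ k.+1) 0 j =
            (l - 1) * l ^+ k.+1 * v 0 j.
    by rewrite !vGk !mxE mulrBl mul1r -exprS mulrBl.
  have e2 : (v *m Gc ^+ k.+2) 0 j - (v *m Gc ^+ k.+1) 0 j =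
            \sum_a v 0 a * (g k.+1 a - g k a)%:C%C.
    rewrite !mxE -sumrB; apply: eq_bigr => a _.
    by rewrite -mulrBr -!cplx_mxX !cplx_mxE rmorphB.
  have := normc_sum (fun a => v 0 a * (g k.+1 a - g k a)%:C%C).
  rewrite -e2 e1 !Normc.normcM normcX.
  under eq_bigr do rewrite Normc.normcM normc_real.
  apply: le_trans; rewrite /delta -mulrA ler_wpM2l ?normc_ge0 //.
  by rewrite ler_peMl ?normc_ge0 // exprn_ege1.
have [N HN] := cvg0_eventually_le r0 (divr_gt0 delta_gt0 (ltr0Sn _ 1)).
have := HN N (leqnn _); have := delta_le N; have := ler_norm (r N); lra.
Qed.

Lemma gamma_lt1P n (G : 'M[R]_n) : gamma G < 1 <->
  (forall l, eigenvalue (cplx_mx G) l -> l != 1 -> normc l < 1).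
Proof.
have [rs [_ ev_rs]] := eigenvalues_cplx_mx G.
rewrite /gamma; set T := [set _ | _ in _].
have T_ub x : T x -> x <= \sum_(z <- rs) normc z.
  move=> [l [el _] <-]; move: el; rewrite ev_rs => lrs.
  rewrite (big_rem l lrs) /= lerDl; apply: sumr_ge0 => *; exact: normc_ge0.
split=> [T_lt1 l el l1 | ev_lt1].
  apply: le_lt_trans T_lt1; apply: sup_upper_bound; last by exists l.
  by split; [exists (normc l), l | exists (\sum_(z <- rs) normc z)].
have [-> | /set0P [x Tx]] := eqVneq T set0; first by rewrite sup0 ltr01.
pose c := \big[Num.max/0]_(z <- rs | (z != 1) && eigenvalue (cplx_mx G) z) normc z.
have c_lt1 : c < 1.
  rewrite /c big_seq_cond; elim/big_ind: _ => //.
    by move=> x1 x2 x1_lt1 x2_lt1; rewrite gt_max x1_lt1 x2_lt1.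
  by move=> z /andP[_ /andP[z1 ez]]; exact: ev_lt1.
apply: le_lt_trans c_lt1; apply: ge_sup; first by exists x.
move=> _ [l [el l1] <-]; have lrs : l \in rs by rewrite -ev_rs.
by apply: (le_bigmax_seq _ _ _ _ lrs); rewrite l1 el.
Qed.

Lemma unitmx_ker0 n (A : 'M[R]_n) :
  (forall x : 'cV[R]_n, A *m x = 0 -> x = 0) -> A \in unitmx.
Proof.
move=> A_inj; rewrite -unitmx_tr -row_free_unit; apply/inj_row_free => v vAt0.
have : v^T = 0 by apply: A_inj; rewrite -(trmxK A) -trmx_mul vAt0 trmx0.
by move/(congr1 trmx); rewrite trmxK trmx0.
Qed.

Lemma eigenvalue1_cplx_mxF n (G : 'M[R]_n) :
  (forall x : 'cV[R]_n, G *m x = x -> x = 0) -> ~~ eigenvalue (cplx_mx G) 1.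
Proof.
move=> fix0; apply/negP => /eigenvalueP [v vG v0].
have u : (1%:M - G) \in unitmx.
  apply: unitmx_ker0 => x; rewrite mulmxBl mul1mx => /eqP; rewrite subr_eq0.
  by move=> /eqP/esym; exact: fix0.
have uc : (1%:M - cplx_mx G) \in unitmx.
  rewrite /cplx_mx -(map_mx1 (real_complex R)) -map_mxB unitmxE det_map_mx.
  by rewrite unitfE fmorph_eq0 -unitfE -unitmxE.
have : v *m (1%:M - cplx_mx G) = 0 by rewrite mulmxBr mulmx1 vG scale1r subrr.
move/(congr1 (mulmx^~ (invmx (1%:M - cplx_mx G)))).
by rewrite -mulmxA mulmxV // mulmx1 mul0mx => v_eq0; move/eqP: v0.
Qed.

End Spectral.

Section BlockIteration.
Variables (R : realType) (n m : nat) (A Y : 'M[R]_(n + m)) (b y0 : 'cV[R]_(n + m)).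
Variables (G : 'M[R]_n) (H : 'M[R]_(m, n)) (Q : 'M[R]_m).
Hypothesis solution_y0 : b = A *m y0.

Lemma iter_seqE x0 k : iter_seq A Y b x0 k = y0 + (1%:M - Y *m A) ^+ k *m (x0 - y0).
Proof.
elim: k => [|k IH] /=; first by rewrite expr0 mul1mx addrC subrK.
rewrite IH solution_y0 exprS -mulmxE -mulmxA; set D := _ *m (x0 - y0).
rewrite mulmxBl mul1mx mulmxDr mulmxDr opprD mulmxDr !mulmxN addNKr !mulmxA.
by rewrite addrA.
Qed.

Hypotheses (iteration_block : 1%:M - Y *m A = block_mx G 0 H Q).
Hypotheses (QH : Q *m H = 0) (QQ : Q *m Q = Q).

Local Notation T_exp k :=
  ((block_mx 0 0 0 Q : 'M_(n + m)) + col_mx G H *m G ^+ k *m row_mx 1%:M 0).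

Lemma iteration_block_exp k : block_mx G 0 H Q ^+ k.+1 = T_exp k.
Proof.
elim: k => [|k IH].
  rewrite expr1 expr0 mulmx1 mul_col_row !mulmx1 !mulmx0 add_block_mx.
  by rewrite !add0r addr0.
rewrite exprS -mulmxE IH mulmxDr; congr (_ + _).
  by rewrite mulmx_block !mulmx0 !mul0mx !addr0 add0r QQ.
rewrite !mulmxA mul_block_col mul0mx addr0 QH addr0 -mul_col_mx.
by rewrite exprS -mulmxE !mulmxA.
Qed.

Lemma iter_seqSE x0 k : iter_seq A Y b x0 k.+1 = y0 + T_exp k *m (x0 - y0).
Proof. by rewrite iter_seqE iteration_block iteration_block_exp. Qed.

Lemma usubmx_iteration_exp k (p : 'cV[R]_n) (q : 'cV[R]_m) :
  usubmx (T_exp k *m col_mx p q) = G ^+ k.+1 *m p.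
Proof.
rewrite mulmxDl mul_block_col !mul0mx addr0 -!mulmxA mul_row_col mul0mx addr0.
rewrite mul1mx mul_col_mx add_col_mx col_mxKu add0r.
by rewrite exprS -mulmxE mulmxA.
Qed.

(* Starting from y0 + e_c, the top block of x^(k+1) - y0 is the c-th column
   of G^(k+1). *)
Lemma convergent_cvg_exp : iteration_convergent A Y b ->
  forall a c, exists l : R, (fun k => (G ^+ k.+1) a c) @ \oo --> l.
Proof.
move=> conv a c; pose d : 'cV[R]_(n + m) := col_mx (delta_mx c 0) 0.
have [xs [xs_lim _]] := conv (y0 + d).
exists (xs (lshift m a) 0 - y0 (lshift m a) 0).
have lim_a := xs_lim (lshift m a) 0.
rewrite -(cvg_shiftS (fun k => iter_seq A Y b (y0 + d) k (lshift m a) 0)) in lim_a.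
have y0dK : y0 + d - y0 = d by rewrite addrAC subrr add0r.
have -> : (fun k => (G ^+ k.+1) a c) =
    (fun k => iter_seq A Y b (y0 + d) k.+1 (lshift m a) 0 - y0 (lshift m a) 0).
  apply: funext => k; rewrite iter_seqSE y0dK [in RHS]mxE addrAC subrr add0r.
  have usubE (Z : 'cV[R]_(n + m)) : Z (lshift m a) 0 = usubmx Z a 0 by rewrite mxE.
  by rewrite usubE usubmx_iteration_exp -colE mxE.
exact: cvgB lim_a (cvg_cst _).
Qed.

Lemma cvg_exp0_convergent : (forall i j, (fun k => (G ^+ k) i j) @ \oo --> 0) ->
  A *m (block_mx 0 0 0 Q : 'M_(n + m)) = 0 -> iteration_convergent A Y b.
Proof.
move=> G0 AQ0 x0; set d := x0 - y0.
exists (y0 + block_mx 0 0 0 Q *m d); split; last first.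
  by rewrite mulmxDr -solution_y0 mulmxA AQ0 mul0mx addr0.
move=> i j; rewrite -(cvg_shiftS (fun k => iter_seq A Y b x0 k i j)).
have -> : (fun k => iter_seq A Y b x0 k.+1 i j) = (fun k =>
    (y0 + block_mx 0 0 0 Q *m d) i j +
    (col_mx G H *m G ^+ k *m (row_mx 1%:M 0 *m d)) i j).
  apply: funext => k; rewrite iter_seqSE mulmxDl addrA.
  by rewrite -(mulmxA (col_mx G H *m G ^+ k)) [LHS]mxE.
have := cvgD (cvg_cst ((y0 + block_mx 0 0 0 Q *m d) i j))
  (cvg0_mulmx_mid (col_mx G H) (row_mx 1%:M 0 *m d) G0 i j).
by rewrite addr0; apply.
Qed.

End BlockIteration.

Theorem theorem1 (R : realType) (n m : nat)
  (W P : 'M[R]_n) (B : 'M[R]_(m, n)) (b : 'cV[R]_(n + m)) :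
  posdef W -> posdef P ->
  (\rank B < m)%N -> (m <= n)%N ->
  (exists y : 'cV[R]_(n + m), b = block_mx W B^T (- B) 0 *m y) ->
  let A : 'M[R]_(n + m) := block_mx W B^T (- B) 0 in
  let M : 'M[R]_(n + m) := block_mx P B^T (- B) 0 in
  let E : 'M[R]_m := B *m invmx P *m B^T in
  let X : 'M[R]_n := invmx P - invmx P *m B^T *m mpinv E *m B *m invmx P in
  iteration_convergent A (mpinv M) b <-> gamma (X *m (P - W)) < 1.
Proof.
move=> pdW pdP _ _ [y0 solution_y0] A M E X.
have pdPi := posdef_invmx pdP.
have PPi : P *m invmx P = 1%:M by rewrite mulmxV ?posdef_unitmx.
have MPS := mpinvP E.
have -> : mpinv M = block_mx X (- (invmx P *m B^T *m mpinv E))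
                             (mpinv E *m B *m invmx P) (mpinv E).
  exact/mpinv_eq/(saddle_pinv_is_MP pdPi PPi erefl MPS).
have T_block := saddle_iteration_block W pdPi PPi (erefl E) MPS.
have QH := mulQH W P (invmx P) B MPS.
have QQ := mulQQ MPS.
rewrite gamma_lt1P; split=> [conv | G_lt1].
  exact/cvg_mxexp_eigenvalue_lt1/(convergent_cvg_exp solution_y0 T_block QH QQ).
apply: (cvg_exp0_convergent solution_y0 T_block QH QQ); last first.
  exact: (mul_saddle_projQ W pdPi (erefl E) MPS).
apply: mxexp_cvg0 => l; have [-> | l1 el] := eqVneq l 1; last exact: G_lt1.
have G_fix0 := saddle_fixpoint_eq0 pdPi PPi (erefl E) MPS pdW.
by rewrite (negbTE (eigenvalue1_cplx_mxF G_fix0)).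
Qed.
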